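(* Let $N$ be a conditionally acyclic TCP-net over variables $V$ in which every CPT order $\succ^X_p$ has a greatest element, and let $\mathbf{x}$ be a (possibly empty) assignment to a subset $\mathbf{X}\subseteq V$. Let $o$ be the outcome produced by the forward sweep procedure: traverse the variables in a topological order of the directed graph $(V,\mathsf{cp})$, keep the value given by $\mathbf{x}$ for variables in $\mathbf{X}$, and set each other variable $X$ to the greatest element of $\succ^X_p$, where $p$ is the (already fixed) assignment to $Pa(X)$. Then $o\in Comp(\mathbf{x})$ and $o$ is the most preferred outcome in $Comp(\mathbf{x})$, i.e. $N\models o\succ o'$ for every $o'\in Comp(\mathbf{x})$ with $o'\neq o$.
   Context: Let $V$ be a finite set of variables, each $X$ with a finite nonempty domain $D(X)$; for $U\subseteq V$, $D(U)$ is the set of assignments to $U$, an outcome is an element of $D(V)$, and juxtaposition of assignments to disjoint sets denotes their combination. For an assignment $\mathbf{x}$ to $\mathbf{X}\subseteq V$, $Comp(\mathbf{x})$ is the set of outcomes extending $\mathbf{x}$. A TCP-net is a tuple $N=\langle V,\mathsf{cp},\mathsf{i},\mathsf{ci},\mathsf{cpt},\mathsf{cit}\rangle$ where: $\mathsf{cp}$ is a set of directed cp-arcs $(X,Y)$ between distinct variables, with $Pa(X)=\{X' : (X',X)\in\mathsf{cp}\}$; $\mathsf{i}$ is a set of directed i-arcs $(X,Y)$ between distinct variables; $\mathsf{ci}$ is a set of undirected ci-arcs $\{X,Y\}$ between distinct variables, each with a nonempty selector set $S(X,Y)\subseteq V\setminus\{X,Y\}$; $\mathsf{cpt}$ assigns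 to each $X$ a table $CPT(X)$ mapping each $p\in D(Pa(X))$ to a strict partial order $\succ^X_p$ on $D(X)$ (for an assignment $u$ fixing the values of $Pa(X)$, $\succ^X_u$ denotes $\succ^X_p$ for the values $p$ that $u$ gives to $Pa(X)$); $\mathsf{cit}$ assigns to each ci-arc $\gamma=\{X,Y\}$ a table $CIT(\gamma)$, a possibly partial map from $D(S(X,Y))$ to $\{X\rhd Y,\ Y\rhd X\}$. A strict partial order $\succ$ on $D(V)$ satisfies $CPT(X)$ iff for all $p\in D(Pa(X))$, all $w\in D(V\setminus(\{X\}\cup Pa(X)))$ and all $x,x'\in D(X)$ with $x\succ^X_p x'$: $xpw\succ x'pw$. It satisfies an i-arc $(X,Y)$ iff for every $w\in D(V\setminus\{X,Y\})$, all $x,x'\in D(X)$ with $x\succ^X_w x'$ and all $y,y'\in D(Y)$: $xyw\succ x'y'w$. It satisfies $CIT(\gamma)$ for a ci-arc $\gamma=\{X,Y\}$ with $Z=S(X,Y)$ iff for every $z\in D(Z)$ at which $CIT(\gamma)$ is defined and equals $X\rhd Y$, every $w\in D(V\setminus(\{X,Y\}\cup Z))$, all $x,x'$ with $x\succ^X_{zw}x'$ and all $y,y'\in D(Y)$: $xyzw\succ x'y'zw$ (symmetrically for $Y\rhd X$). $\succ$ satisfies $N$ iff it satisfies every CPT, i-arc and CIT; $N\models o\succ o'$ means $o\succ o'$ holds in every strict partial order on $D(V)$ satisfying $N$. The dependency graph $N^\star$ has vertex set $V$, the cp-arcs and i-arcs as directed edges, the ci-arcs as undirected edges, and additionally, for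 every ci-arc $\{X_i,X_j\}$ and every $X_k\in S(X_i,X_j)$, the directed edges $(X_k,X_i)$ and $(X_k,X_j)$ (if not already present). Let $S(N)$ be the union of all selector sets. For $w\in D(S(N))$, the $w$-directed graph of $N^\star$ consists of the vertices and directed edges of $N^\star$ together with, for every ci-arc $\{X_i,X_j\}$ whose CIT maps the restriction of $w$ to $S(X_i,X_j)$ to $X_i\rhd X_j$, a directed edge $(X_i,X_j)$ (if not already present). $N$ is conditionally acyclic iff every $w$-directed graph is acyclic. *)

From mathcomp Require Import all_boot.
Set Implicit Arguments. Unset Strict Implicit. Unset Printing Implicit Defensive.

Section TCP.
Variables (V : finType) (D : V -> finType).

Definition outcome := forall v : V, D v.

Definition upd (o : outcome) (X : V) (a : D X) : outcome :=
  @dfwith V (fun v => D v) o X a.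

(* partial assignment x to the subset {v | x v <> None} of V *)
Definition passign := forall v : V, option (D v).

Definition Comp (x : passign) (o : outcome) : Prop :=
  forall v a, x v = Some a -> o v = a.

(* TCP-net data.
   - cp X Y   : cp-arc (X,Y);  Pa(X) = [set Y | cp Y X]
   - iarc X Y : i-arc (X,Y)
   - ciarc X Y: undirected ci-arc {X,Y} (symmetric relation)
   - sel X Y  : selector set S(X,Y)
   - cpt X o  : the order >^X_p, where p = restriction of o to Pa(X)
                (well-formedness demands it depends only on Pa(X))
   - cit X Y o: CIT({X,Y}) is defined at the restriction z of o to S(X,Y)
                and maps it to X |> Y (depends only on S(X,Y)). *)
Record tcpnet := TCPNet {
  cp : rel V;
  iarc : rel V;
  ciarc : rel V;
  sel : V -> V -> {set V};
  cpt : forall X : V, outcome -> rel (D X);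
  cit : V -> V -> outcome -> bool
}.
Arguments cpt t X o : clear implicits.

Definition strict_porder (T : Type) (r : T -> T -> Prop) : Prop :=
  (forall a, ~ r a a) /\ (forall a b c, r a b -> r b c -> r a c).

Definition wf_tcpnet (N : tcpnet) : Prop :=
  (forall X, 0 < #|D X|) /\
  (forall X, ~~ cp N X X) /\ (forall X, ~~ iarc N X X) /\
  (forall X, ~~ ciarc N X X) /\ (forall X Y, ciarc N X Y = ciarc N Y X) /\
  (forall X Y, sel N X Y = sel N Y X) /\
  (forall X Y, ciarc N X Y ->
     [/\ sel N X Y != set0, X \notin sel N X Y & Y \notin sel N X Y]) /\
  (forall X (o1 o2 : outcome), (forall Y, cp N Y X -> o1 Y = o2 Y) ->
     forall a b, cpt N X o1 a b = cpt N X o2 a b) /\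
  (forall X (o : outcome), strict_porder (fun a b => cpt N X o a b)) /\
  (* CITs: possibly partial maps D(S(X,Y)) -> {X |> Y, Y |> X} *)
  (forall X Y (o : outcome), cit N X Y o -> ciarc N X Y) /\
  (forall X Y (o : outcome), ~~ (cit N X Y o && cit N Y X o)) /\
  (forall X Y (o1 o2 : outcome), (forall Z, Z \in sel N X Y -> o1 Z = o2 Z) ->
     cit N X Y o1 = cit N X Y o2).

Definition sat_cpt (N : tcpnet) (R : outcome -> outcome -> Prop) (X : V) :=
  forall (o : outcome) (a a' : D X), cpt N X o a a' -> R (upd o a) (upd o a').

Definition sat_iarc (N : tcpnet) (R : outcome -> outcome -> Prop) (X Y : V) :=
  forall (o : outcome) (a a' : D X) (b b' : D Y), cpt N X o a a' ->
    R (upd (upd o a) b) (upd (upd o a') b').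

Definition sat_cit (N : tcpnet) (R : outcome -> outcome -> Prop) (X Y : V) :=
  forall (o : outcome) (a a' : D X) (b b' : D Y), cit N X Y o -> cpt N X o a a' ->
    R (upd (upd o a) b) (upd (upd o a') b').

Definition sat (N : tcpnet) (R : outcome -> outcome -> Prop) : Prop :=
  (forall X, sat_cpt N R X) /\
  (forall X Y, iarc N X Y -> sat_iarc N R X Y) /\
  (forall X Y, ciarc N X Y -> sat_cit N R X Y /\ sat_cit N R Y X).

Definition entails (N : tcpnet) (o o' : outcome) : Prop :=
  forall R : outcome -> outcome -> Prop, strict_porder R -> sat N R -> R o o'.

(* the w-directed graph of N*, for w given as (the restriction of) an outcome *)
Definition wgraph (N : tcpnet) (w : outcome) : rel V :=
  fun X Y =>
    [|| cp N X Y, iarc N X Y,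
        [exists Z, ciarc N Y Z && (X \in sel N Y Z)]
      | cit N X Y w].

Definition acyclic (e : rel V) : Prop :=
  forall X Y, e X Y -> ~~ connect e Y X.

Definition cond_acyclic (N : tcpnet) : Prop :=
  forall w : outcome, acyclic (wgraph N w).

Definition has_greatest (T : finType) (r : rel T) : Prop :=
  exists g, forall a, a != g -> r g a.

Definition topo_order (N : tcpnet) (s : seq V) : Prop :=
  [/\ uniq s, forall v, v \in s &
      forall X Y, cp N X Y -> index X s < index Y s].

Definition greatest_of (N : tcpnet) (X : V) (o : outcome) : option (D X) :=
  [pick g : D X | [forall a : D X, (a != g) ==> cpt N X o g a]].

Definition sweep_step (N : tcpnet) (x : passign) (o : outcome) (X : V)
  : outcome :=
  match x X with
  | Some a => upd o a
  | None => match greatest_of N X o with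
            | Some g => upd o g
            | None => o
            end
  end.

(* run the sweep along s, starting from an arbitrary initial outcome o0
   (every variable gets overwritten exactly once along a topological order) *)
Definition forward_sweep (N : tcpnet) (x : passign) (s : seq V) (o0 : outcome)
  : outcome := foldl (sweep_step N x) o0 s.

End TCP.
Arguments cpt {V D} t X o.

From Stdlib Require Import FunctionalExtensionality.
From mathcomp Require Import all_boot.

Set Implicit Arguments.
Unset Strict Implicit.
Unset Printing Implicit Defensive.

(* Along a topological order of the cp-graph, a variable's parents are fixed
   before the variable itself and never touched again, so the swept outcome o
   takes at every free variable the greatest value of its CPT given o.  Hence
   any other completion o' of x can be improved by a single CPT flip: reset the
   earliest variable (in the topological order) on which o' and o differ to its
   value in o.  Its parents already agree with o, so this is a CPT-improving
   flip, and it strictly shrinks the set of disagreements; iterating reaches o. *)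

Section Update.
Variables (V : finType) (D : V -> finType).

Lemma upd_in (o : outcome D) X (a : D X) : upd o a X = a.
Proof. exact: dfwith_in. Qed.

Lemma upd_out (o : outcome D) X (a : D X) Y : X != Y -> upd o a Y = o Y.
Proof. exact: dfwith_out. Qed.

Lemma upd_id (o : outcome D) X : upd o (o X) = o.
Proof. by apply: functional_extensionality_dep => Y; rewrite /upd; case: dfwithP. Qed.

Definition disagreement (o1 o : outcome D) : {set V} := [set v | o1 v != o v].

Lemma disagreement_eq0 (o1 o : outcome D) : disagreement o1 o = set0 -> o1 = o.
Proof.
move=> h; apply: functional_extensionality_dep => v.
by move: (in_set0 v); rewrite -h inE => /negbFE /eqP.
Qed.

Lemma card_disagreement_upd (o1 o : outcome D) X :
  X \in disagreement o1 o ->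
  #|disagreement (upd o1 (o X)) o| < #|disagreement o1 o|.
Proof.
move=> hX; rewrite [X in _ < X](cardsD1 X) hX ltnS; apply: subset_leq_card.
apply/subsetP => w; rewrite !inE.
have [->|nXw] := eqVneq w X; first by rewrite upd_in eqxx.
by rewrite upd_out 1?eq_sym.
Qed.

Lemma Comp_upd (x : passign D) (o1 o : outcome D) X :
  Comp x o1 -> Comp x o -> Comp x (upd o1 (o X)).
Proof.
move=> C1 C v a hv; have [eXv|nXv] := eqVneq X v; first by subst v; rewrite upd_in; apply: C.
by rewrite upd_out //; apply: C1.
Qed.

End Update.

Section ForwardSweep.
Variables (V : finType) (D : V -> finType) (N : tcpnet D).

Hypothesis cpt_local : forall X (o1 o2 : outcome D),
  (forall Y, cp N Y X -> o1 Y = o2 Y) -> forall a b, cpt N X o1 a b = cpt N X o2 a b.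

Hypothesis cpt_greatest : forall (X : V) (o : outcome D), has_greatest (cpt N X o).

Variable x : passign D.

Lemma sweep_stepP (o : outcome D) X : exists g : D X,
  [/\ sweep_step N x o X = upd o g, forall a, x X = Some a -> g = a
    & x X = None -> forall a, a != g -> cpt N X o g a].
Proof.
rewrite /sweep_step; case: (x X) => [a|]; first by exists a; split=> // b [].
rewrite /greatest_of; case: pickP => [g /forallP hg|hnone].
  by exists g; split=> // _ a; apply/implyP/hg.
case: (cpt_greatest X o) => g hg; move/negP: (hnone g); case.
by apply/forallP => a; apply/implyP/hg.
Qed.

Lemma cpt_upd_nonparent (o : outcome D) Z (g : D Z) W :
  ~~ cp N Z W -> forall a b, cpt N W (upd o g) a b = cpt N W o a b.
Proof.
move=> nZW; apply: cpt_local => Y hY; apply: upd_out.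
by apply: contraNneq nZW => ->.
Qed.

Definition settled (o : outcome D) X : Prop :=
  (forall a, x X = Some a -> o X = a) /\
  (x X = None -> forall a, a != o X -> cpt N X o (o X) a).

Lemma sweep_step_settled (o : outcome D) Z :
  ~~ cp N Z Z -> settled (sweep_step N x o Z) Z.
Proof.
move=> nZZ; have [g [-> hfix hgreat]] := sweep_stepP o Z.
rewrite /settled upd_in; split=> [a /hfix // | hx a ag].
by rewrite cpt_upd_nonparent //; apply: hgreat.
Qed.

Lemma sweep_step_settled_other (o : outcome D) Z W : Z != W -> ~~ cp N Z W ->
  settled o W -> settled (sweep_step N x o Z) W.
Proof.
move=> neqZW nonparent [hfix hgreat]; have [g [-> _ _]] := sweep_stepP o Z.
rewrite /settled upd_out //; split=> // hx a ag.
by rewrite cpt_upd_nonparent //; apply: hgreat.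
Qed.

Lemma forward_sweep_prefix (s : seq V) (hs : topo_order N s) (o0 : outcome D) n :
  n <= size s -> forall X, index X s < n ->
  settled (foldl (sweep_step N x) o0 (take n s)) X.
Proof.
case: hs => uniq_s _ topo_s.
elim: n => [//|n IH] hn X; rewrite (take_nth X hn) -cats1 foldl_cat /=.
set Z := nth X s n; have iZ : index Z s = n by rewrite index_uniq.
have nonparent W : index W s <= n -> ~~ cp N Z W.
  by move=> hW; apply: contraTN hW => /topo_s; rewrite iZ -ltnNge.
rewrite ltnS leq_eqVlt => /predU1P [eX|lX].
  have <- : X = Z by rewrite /Z -eX nth_index // -index_mem eX.
  by apply: sweep_step_settled; apply/negP => /topo_s; rewrite ltnn.
apply: sweep_step_settled_other; first by apply: contraTneq lX => <-; rewrite iZ ltnn.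
  exact/nonparent/ltnW.
exact: IH (ltnW hn) X lX.
Qed.

Lemma forward_sweep_settled (s : seq V) (hs : topo_order N s) (o0 : outcome D) X :
  settled (forward_sweep N x s o0) X.
Proof.
rewrite /forward_sweep -(take_size s); apply: forward_sweep_prefix => //.
by case: hs => _ in_s _; rewrite index_mem.
Qed.

Variables (s : seq V) (o : outcome D).
Hypothesis topo_s : topo_order N s.
Hypothesis settled_o : forall X, settled o X.

Lemma settled_Comp : Comp x o.
Proof. by move=> X a; apply: (settled_o X).1. Qed.

Lemma earliest_disagreement (o1 : outcome D) : Comp x o1 -> o1 <> o ->
  exists2 X, X \in disagreement o1 o & cpt N X o1 (o X) (o1 X).
Proof.
move=> Comp_o1 neq; case: (set_0Vmem (disagreement o1 o)) => [/disagreement_eq0 //|].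
case=> v; rewrite inE => hv.
case: (arg_minnP (P := [pred v | o1 v != o v]) (fun v => index v s) hv) => X /= hX hmin.
exists X; first by rewrite inE.
have [_ _ topo] := topo_s.
have agree Y : cp N Y X -> o1 Y = o Y.
  by move=> /topo hYX; apply: contraTeq hYX => hY; rewrite -leqNgt hmin.
have free_X : x X = None.
  case hxX: (x X) => [a|] //; move: hX.
  by rewrite (Comp_o1 _ _ hxX) (settled_Comp hxX) eqxx.
by rewrite (cpt_local agree); apply: (settled_o X).2.
Qed.

Lemma settled_preferred (R : outcome D -> outcome D -> Prop) :
  strict_porder R -> (forall X, sat_cpt N R X) ->
  forall o1, Comp x o1 -> o1 <> o -> R o o1.
Proof.
move=> [_ R_trans] R_cpt.
suff: forall n o1, #|disagreement o1 o| <= n -> Comp x o1 -> o1 = o \/ R o o1.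
  by move=> h o1 C1 neq; case: (h _ o1 (leqnn _) C1).
elim=> [|n IH] o1 hn C1.
  by left; apply: disagreement_eq0; apply/eqP; rewrite -cards_eq0 -leqn0.
have [/disagreement_eq0 -> | ne0] := eqVneq (disagreement o1 o) set0; first by left.
have neq : o1 <> o.
  by move=> e; move/eqP: ne0; apply; apply/setP => v; rewrite e !inE eqxx.
have [X hX flip] := earliest_disagreement C1 neq.
have R_flip := R_cpt X o1 _ _ flip; rewrite upd_id in R_flip.
right; have [<- //|R_o] := IH (upd o1 (o X)) (leq_trans (card_disagreement_upd hX) hn)
                               (Comp_upd X C1 settled_Comp).
exact: R_trans R_o R_flip.
Qed.

End ForwardSweep.

Theorem corollary1 (V : finType) (D : V -> finType) (N : tcpnet D)
  (hwf : wf_tcpnet N) (hacyc : cond_acyclic N)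
  (hgreat : forall (X : V) (o : outcome D), has_greatest (cpt N X o))
  (x : passign D) (s : seq V) (hs : topo_order N s) (o0 : outcome D) :
  let o := forward_sweep N x s o0 in
  Comp x o /\ (forall o' : outcome D, Comp x o' -> o' <> o -> entails N o o').
Proof.
move=> o; have [_ [_ [_ [_ [_ [_ [_ [cpt_local _]]]]]]]] := hwf.
have settled_o := forward_sweep_settled cpt_local hgreat x hs o0.
split=> [|o' Comp_o' neq R R_porder [R_cpt _]]; first exact: settled_Comp.
exact: (settled_preferred cpt_local hs settled_o R_porder R_cpt Comp_o' neq).
Qed.
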